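(* A term $t$ is $\to_w$-normal if and only if $t$ is a weak normal term according to the following grammar: weak answers $a ::= v \mid a[x\backslash i]$ with $x\notin\mathrm{ofv}(a)$ $\mid a[x\backslash a']$ with $x\in \mathrm{fv}(a)\setminus\mathrm{ofv}(a)$; inert terms $i ::= x \mid i\,n \mid i[x\backslash i']$ with $x\notin\mathrm{ofv}(i)$ $\mid i[x\backslash a]$ with $x\in\mathrm{fv}(i)\setminus\mathrm{ofv}(i)$; weak normal terms $n ::= a \mid i$.
   Context: Terms: $t,u,s ::= x \mid \lambda x.t \mid t\,u \mid t[x\backslash u]$, where $t[x\backslash u]$ is an explicit substitution binding $x$ in $t$; terms up to $\alpha$-renaming; $\mathrm{fv}(t[x\backslash u]) = (\mathrm{fv}(t)\setminus\{x\})\cup \mathrm{fv}(u)$. Values: $v ::= \lambda x.t$. Substitution contexts: $S ::= \langle\cdot\rangle \mid S[x\backslash u]$. Weak contexts: $W ::= \langle\cdot\rangle \mid W\,t \mid t\,W \mid t[x\backslash W] \mid W[x\backslash u]$. $W\langle\langle t\rangle\rangle$ denotes plugging where $W$ does not capture free variables of $t$. Root rules: $S\langle \lambda x.t\rangle u \mapsto_m S\langle t[x\backslash u]\rangle$; $W\langle\langle x\rangle\rangle[x\backslash u] \mapsto_{e} W\langle\langle u\rangle\rangle[x\backslash u]$ ($W$ weak context); $t[x\backslash S\langle v\rangle] \mapsto_{gcv} S\langle t\rangle$ if $x\notin\mathrm{fv}(t)$. $\to_w$ is the union of the closures of these three rules under weak contexts. Shallow free variables: $\mathrm{ofv}(x)=\{x\}$,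 $\mathrm{ofv}(\lambda x.t)=\emptyset$, $\mathrm{ofv}(tu)=\mathrm{ofv}(t)\cup\mathrm{ofv}(u)$, $\mathrm{ofv}(t[x\backslash u]) = (\mathrm{ofv}(t)\setminus\{x\})\cup\mathrm{ofv}(u)$. *)

From mathcomp Require Import all_boot.
Set Implicit Arguments. Unset Strict Implicit. Unset Printing Implicit Defensive.

(* t ::= x | \x.t | t u | t[x\u];  in [ES t u], index 0 of [t] is bound. *)
Inductive term : Type :=
| Var : nat -> term
| Lam : term -> term
| App : term -> term -> term
| ES  : term -> term -> term.

Fixpoint fv (n : nat) (t : term) : bool :=
  match t with
  | Var m => m == n
  | Lam b => fv n.+1 b
  | App t u => fv n t || fv n u
  | ES t u => fv n.+1 t || fv n u
  end.

Fixpoint ofv (n : nat) (t : term) : bool :=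
  match t with
  | Var m => m == n
  | Lam _ => false
  | App t u => ofv n t || ofv n u
  | ES t u => ofv n.+1 t || ofv n u
  end.

Fixpoint lift (k c : nat) (t : term) : term :=
  match t with
  | Var m => if m < c then Var m else Var (m + k)
  | Lam b => Lam (lift k c.+1 b)
  | App t u => App (lift k c t) (lift k c u)
  | ES t u => ES (lift k c.+1 t) (lift k c u)
  end.

(* remove the (absent) free index c: decrement free indices > c *)
Fixpoint lower (c : nat) (t : term) : term :=
  match t with
  | Var m => if m < c then Var m else Var m.-1
  | Lam b => Lam (lower c.+1 b)
  | App t u => App (lower c t) (lower c u)
  | ES t u => ES (lower c.+1 t) (lower c u)
  end.

Inductive sctx : Type :=
| SHole : sctx
| SES : sctx -> term -> sctx.

Fixpoint plugS (Sc : sctx) (t : term) : term :=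
  match Sc with
  | SHole => t
  | SES Sc u => ES (plugS Sc t) u
  end.

Fixpoint sdepth (Sc : sctx) : nat :=
  match Sc with SHole => 0 | SES Sc _ => (sdepth Sc).+1 end.

Inductive wctx : Type :=
| WHole : wctx
| WAppL : wctx -> term -> wctx
| WAppR : term -> wctx -> wctx
| WESR : term -> wctx -> wctx
| WESL : wctx -> term -> wctx.

Fixpoint plugW (W : wctx) (t : term) : term :=
  match W with
  | WHole => t
  | WAppL W u => App (plugW W t) u
  | WAppR u W => App u (plugW W t)
  | WESR u W => ES u (plugW W t)
  | WESL W u => ES (plugW W t) u
  end.

Fixpoint wdepth (W : wctx) : nat :=
  match W with
  | WHole => 0
  | WAppL W _ | WAppR _ W | WESR _ W => wdepth W
  | WESL W _ => (wdepth W).+1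
  end.

Inductive root_step : term -> term -> Prop :=
| root_m : forall Sc t u,
    root_step (App (plugS Sc (Lam t)) u)
              (plugS Sc (ES t (lift (sdepth Sc) 0 u)))
    (* W<<x>>[x\u] -> W<<u>>[x\u]: x is the index wdepth W at the hole *)
| root_e : forall W u,
    root_step (ES (plugW W (Var (wdepth W))) u)
              (ES (plugW W (lift (wdepth W).+1 0 u)) u)
| root_gcv : forall t Sc b,
    ~~ fv 0 t ->
    root_step (ES t (plugS Sc (Lam b)))
              (plugS Sc (lift (sdepth Sc) 0 (lower 0 t))).

Definition wstep (t t' : term) : Prop :=
  exists W r r', root_step r r' /\ t = plugW W r /\ t' = plugW W r'.

Definition w_normal (t : term) : Prop := forall t', ~ wstep t t'.

Inductive answer : term -> Prop :=
| ans_val : forall b, answer (Lam b)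
| ans_es_inert : forall a i,
    answer a -> inert i -> ~~ ofv 0 a -> answer (ES a i)
| ans_es_ans : forall a a',
    answer a -> answer a' -> fv 0 a -> ~~ ofv 0 a -> answer (ES a a')
with inert : term -> Prop :=
| in_var : forall x, inert (Var x)
| in_app : forall i n, inert i -> wnormal n -> inert (App i n)
| in_es_inert : forall i i',
    inert i -> inert i' -> ~~ ofv 0 i -> inert (ES i i')
| in_es_ans : forall i a,
    inert i -> answer a -> fv 0 i -> ~~ ofv 0 i -> inert (ES i a)
with wnormal : term -> Prop :=
| wn_ans : forall a, answer a -> wnormal a
| wn_inert : forall i, inert i -> wnormal i.

From mathcomp Require Import all_boot.

Set Implicit Arguments.
Unset Strict Implicit.
Unset Printing Implicit Defensive.

(* Answers are exactly the terms S<λx.t>, and no inert term has that shape.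
   Hence each clause of the grammar of normal terms is precisely the absence
   of one root redex at the top of the term: [i n] forbids an [m]-redex,
   [x ∉ ofv] forbids an [e]-redex (the shallow occurrences of [x] are exactly
   those under a weak context), and [x ∈ fv] when the substituted term is an
   answer forbids a [gcv]-redex.  Both properties pass to all subterms not
   under a λ and say nothing about λ-bodies, so structural induction gives
   both directions. *)

Lemma answer_plugS_Lam t : answer t -> exists Sc b, t = plugS Sc (Lam b).
Proof.
elim=> [b | a i _ [Sc [b ->]] _ _ | a a' _ [Sc [b ->]] _ _ _ _].
- by exists SHole, b.
- by exists (SES Sc i), b.
- by exists (SES Sc a'), b.
Qed.

Lemma inert_plugS_Lam Sc b : ~ inert (plugS Sc (Lam b)).
Proof. by elim: Sc => [|Sc IH u] /= H; inversion H; subst. Qed.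

Lemma answer_not_inert t : answer t -> ~ inert t.
Proof. by case/answer_plugS_Lam=> [Sc [b ->]]; apply: inert_plugS_Lam. Qed.

Lemma wnormal_answer t : wnormal t -> ~ inert t -> answer t.
Proof. by case. Qed.

Lemma wnormal_inert t : wnormal t -> ~ answer t -> inert t.
Proof. by case. Qed.

Lemma wnormal_AppP t u : wnormal (App t u) <-> inert t /\ wnormal u.
Proof.
split=> [H | [Ht Hu]]; last by apply/wn_inert/in_app.
by inversion H as [a Ha | i Hi]; subst; [inversion Ha | inversion Hi].
Qed.

Lemma wnormal_ESP t u :
  wnormal (ES t u) <->
  [/\ wnormal t, wnormal u, ~~ ofv 0 t & answer u -> fv 0 t].
Proof.
split=> [H | [Ht Hu Ho Hf]].
  inversion H as [a Ha | i Hi]; subst; [inversion Ha | inversion Hi]; subst;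
    split=> //; try constructor => //; move/answer_not_inert; contradiction.
case: Ht Ho Hf => a Ha; case: Hu => a' Ha' Ho Hf.
- by apply/wn_ans/ans_es_ans => //; apply: Hf.
- by apply/wn_ans/ans_es_inert.
- by apply/wn_inert/in_es_ans => //; apply: Hf.
- by apply/wn_inert/in_es_inert.
Qed.

Fixpoint compW (W W' : wctx) : wctx :=
  match W with
  | WHole => W'
  | WAppL W u => WAppL (compW W W') u
  | WAppR u W => WAppR u (compW W W')
  | WESR u W => WESR u (compW W W')
  | WESL W u => WESL (compW W W') u
  end.

Lemma plugW_comp W W' r : plugW W (plugW W' r) = plugW (compW W W') r.
Proof. by elim: W => [|W IH u|u W IH|u W IH|W IH u] //=; rewrite IH. Qed.

Lemma wstep_plugW W t t' : wstep t t' -> wstep (plugW W t) (plugW W t').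
Proof.
case=> [W' [r [r' [Hr [-> ->]]]]].
by exists (compW W W'), r, r'; rewrite !plugW_comp.
Qed.

Lemma wstep_root r r' : root_step r r' -> wstep r r'.
Proof. by exists WHole, r, r'. Qed.

Lemma w_normal_plugW W t : w_normal (plugW W t) -> w_normal t.
Proof. by move=> H t' /(wstep_plugW W); apply: H. Qed.

Lemma w_normal_no_root r r' : w_normal r -> ~ root_step r r'.
Proof. by move=> H /wstep_root; apply: H. Qed.

(* Going under [k] explicit substitutions, the variable [n] becomes the
   de Bruijn index [k + n]. *)
Lemma ofv_plugW_Var W n : ofv n (plugW W (Var (wdepth W + n))).
Proof.
elim: W n => [|W IH u|u W IH|u W IH|W IH u] n /=.
- by rewrite eqxx.
- by rewrite IH.
- by rewrite IH orbT.
- by rewrite IH orbT.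
- by rewrite addSnnS IH.
Qed.

Lemma ofv_plugW_VarP t n :
  ofv n t -> exists W, t = plugW W (Var (wdepth W + n)).
Proof.
elim: t n => [m | b _ | t IHt u IHu | t IHt u IHu] n //=.
- by move/eqP=> ->; exists WHole.
- case/orP=> [/IHt [W ->] | /IHu [W ->]].
  + by exists (WAppL W u).
  + by exists (WAppR t W).
- case/orP=> [/IHt [W ->] | /IHu [W ->]].
  + by exists (WESL W u); rewrite /= addSnnS.
  + by exists (WESR t W).
Qed.

Lemma wnormal_no_root r r' : wnormal r -> ~ root_step r r'.
Proof.
move=> Hr Hs; case: Hs Hr => [Sc t u | W u | t Sc b Ht].
- by case/wnormal_AppP=> /inert_plugS_Lam.
- by case/wnormal_ESP=> _ _; rewrite -[wdepth W]addn0 ofv_plugW_Var.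
- case/wnormal_ESP=> _ /wnormal_answer Hu _ Hf.
  by apply: (negP Ht); apply: Hf; apply: Hu; apply: inert_plugS_Lam.
Qed.

Lemma wnormal_plugW W r : wnormal (plugW W r) -> wnormal r.
Proof.
elim: W => [|W IH u|u W IH|u W IH|W IH u] //= H; apply: IH.
- by case/wnormal_AppP: H => /wn_inert.
- by case/wnormal_AppP: H.
- by case/wnormal_ESP: H.
- by case/wnormal_ESP: H.
Qed.

Lemma wnormal_w_normal t : wnormal t -> w_normal t.
Proof.
move=> Ht t' [W [r [r' [Hr [Et _]]]]].
by apply: (wnormal_no_root _ Hr); apply: (wnormal_plugW (W := W)); rewrite -Et.
Qed.

Lemma w_normal_App_not_answer t u : w_normal (App t u) -> ~ answer t.
Proof.
move=> H /answer_plugS_Lam [Sc [b Et]]; subst t.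
exact: (w_normal_no_root H (root_m Sc b u)).
Qed.

Lemma w_normal_ES_nofv t u : w_normal (ES t u) -> ~~ ofv 0 t.
Proof.
move=> H; apply/negP=> /ofv_plugW_VarP [W]; rewrite addn0 => Et; subst t.
exact: (w_normal_no_root H (root_e W u)).
Qed.

Lemma w_normal_ES_fv t u : w_normal (ES t u) -> answer u -> fv 0 t.
Proof.
move=> H /answer_plugS_Lam [Sc [b Eu]]; subst u.
by apply/negPn/negP=> Ht; apply: (w_normal_no_root H (root_gcv Sc b Ht)).
Qed.

Lemma w_normal_wnormal t : w_normal t -> wnormal t.
Proof.
elim: t => [m | b _ | t IHt u IHu | t IHt u IHu] H.
- exact/wn_inert/in_var.
- exact/wn_ans/ans_val.
- have Ht := IHt (w_normal_plugW (W := WAppL WHole u) H).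
  have Hu := IHu (w_normal_plugW (W := WAppR t WHole) H).
  apply/wnormal_AppP; split=> //.
  exact: wnormal_inert Ht (w_normal_App_not_answer H).
- have Ht := IHt (w_normal_plugW (W := WESL WHole u) H).
  have Hu := IHu (w_normal_plugW (W := WESR t WHole) H).
  apply/wnormal_ESP; split=> //.
  + exact: w_normal_ES_nofv H.
  + exact: w_normal_ES_fv H.
Qed.

Theorem proposition4p2 (t : term) : w_normal t <-> wnormal t.
Proof. by split; [apply: w_normal_wnormal | apply: wnormal_w_normal]. Qed.
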